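(* Let $Y \sim N(\theta, \sigma^2)$ with $\sigma^2>0$ known and $\theta\in\mathbb{R}$ unknown, and let the selection function be $p(y) = \mathbf{1}(y>t)$ for some fixed $t\in\mathbb{R}$, so that the selection event is $S=\{Y>t\}$ and the selection probability is $\varphi(\theta) = \mathbb{P}_\theta(Y>t) = \Phi\{(\theta-t)/\sigma\}$. For $y\in\mathbb{R}$ let \[ \Pi(\theta\mid y) = \frac{\int_{-\infty}^\theta \phi\{\sigma^{-1}(\tilde{\theta} - y) \}\, \varphi(\tilde\theta)^{-1} \,\mathrm{d}\tilde\theta}{\int_{-\infty}^\infty \phi\{\sigma^{-1}(\tilde{\theta} - y) \}\, \varphi(\tilde\theta)^{-1}\, \mathrm{d}\tilde\theta} \] be the selective posterior distribution function of $\theta$ based on the uniform prior $\pi(\theta)\propto 1$, and let $\Pi^{-1}(\alpha\mid y)$ denote its $\alpha$-quantile (inverse in $\theta$). Then \[ \mathbb{P}_{\theta_0}\{\theta_0 \leq \Pi^{-1}(\alpha\mid Y)\mid S\} < \alpha \quad \text{for all } (\alpha, \theta_0) \in (0,1)\times \mathbb{R}, \] where the probability is computed under the conditional distribution of $Y\sim N(\theta_0,\sigma^2)$ given $Y>t$.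
   Context: $\phi$ and $\Phi$ denote the standard normal density and distribution function respectively. The selective posterior is obtained by attaching the prior to the selective likelihood, i.e. the density of $Y$ conditional on selection, $f(y\mid S;\theta)=f(y;\theta)p(y)/\varphi(\theta)$, where $\varphi(\theta)=\mathbb{E}_\theta[p(Y)]$ is the probability of selection under parameter $\theta$. *)

From Stdlib Require Import Reals ClassicalDescription.
From Coquelicot Require Import Coquelicot.
Open Scope R_scope.

Definition std_normal_pdf (x : R) : R := exp (- (x ^ 2) / 2) / sqrt (2 * PI).

Definition std_normal_cdf (x : R) : R :=
  RInt_gen std_normal_pdf (Rbar_locally m_infty) (at_point x).

Definition normal_pdf (sigma theta y : R) : R :=
  std_normal_pdf ((y - theta) / sigma) / sigma.

Definition sel_fun (t y : R) : R := if Rlt_dec t y then 1 else 0.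

Definition sel_prob (sigma t theta : R) : R := std_normal_cdf ((theta - t) / sigma).

Definition sel_density (sigma t theta y : R) : R :=
  normal_pdf sigma theta y * sel_fun t y / sel_prob sigma t theta.

Definition post_kernel (sigma t y th : R) : R :=
  std_normal_pdf ((th - y) / sigma) / sel_prob sigma t th.

Definition sel_post_cdf (sigma t y theta : R) : R :=
  RInt_gen (post_kernel sigma t y) (Rbar_locally m_infty) (at_point theta)
  / RInt_gen (post_kernel sigma t y) (Rbar_locally m_infty) (Rbar_locally p_infty).

Definition sel_cond_prob (sigma t theta0 : R) (A : R -> Prop) : R :=
  RInt_gen (fun y => (if excluded_middle_informative (A y) then 1 else 0)
                      * sel_density sigma t theta0 y)
           (Rbar_locally m_infty) (Rbar_locally p_infty).

From Stdlib Require Import Reals Lra Psatz ClassicalDescription Classical FunctionalExtensionality.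
From Coquelicot Require Import Coquelicot.
Open Scope R_scope.

(* Write Pi(y, th) for the selective posterior cdf, k_y for its kernel and
   C(y, th) = Phi((th - y) / sigma) / Phi((th - t) / sigma) = P_th(Y >= y | S).
   As functions of th both Pi(y, .) and C(y, .) are distribution functions; C(y, .) has
   density k_y * h with h increasing (because x + phi x / Phi x is increasing), so tilting
   gives C(y, th) < Pi(y, th).  The kernels k_y have monotone likelihood ratios in y, so
   Pi(., th) is decreasing; it is also right-continuous, and Pi(y, th) > alpha for y close
   to t.  Hence {y > t : th <= Pi^-1(alpha | y)} = {y > t : Pi(y, th) <= alpha} is empty or a
   ray [y*, oo) with y* > t, of conditional probability C(y*, th) < Pi(y*, th) <= alpha. *)

Lemma upward_closed_ray (P : R -> Prop) :
  (forall y y', P y -> y < y' -> P y') -> (exists y, P y) -> (exists y, ~ P y) ->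
  (forall y, ~ P y -> exists y', y < y' /\ ~ P y') ->
  exists ys, forall y, P y <-> ys <= y.
Proof.
  intros Hup [y1 Hy1] [y0 Hy0] Hopen.
  assert (Hlow : forall y, P y -> y0 < y).
  { intros y Hy. apply Rnot_le_lt.
    intros [Hlt | ->]; [exact (Hy0 (Hup y y0 Hy Hlt)) | exact (Hy0 Hy)]. }
  set (E := fun z => P (- z)).
  assert (HE : exists z, E z) by (exists (- y1); unfold E; rewrite Ropp_involutive; exact Hy1).
  assert (HB : bound E) by (exists (- y0); intros z Hz; pose proof (Hlow _ Hz); lra).
  destruct (completeness E HB HE) as [m [Hub Hlub]].
  assert (Hinf : forall y, P y -> - m <= y).
  { intros y Hy. assert (- y <= m) by (apply Hub; unfold E; rewrite Ropp_involutive; exact Hy). lra. }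
  assert (Hys : P (- m)).
  { apply NNPP. intros Hn. destruct (Hopen _ Hn) as [y' [Hy' Hny']].
    assert (m <= - y').
    { apply Hlub. intros z Hz. apply Rnot_lt_le. intros Hlt.
      apply Hny', (Hup (- z)); [exact Hz | lra]. }
    lra. }
  exists (- m). intros y. split; [apply Hinf |].
  intros [Hlt | <-]; [exact (Hup _ _ Hys Hlt) | exact Hys].
Qed.

Lemma le_iff_of_strict_incr (F : R -> R) (q x al : R) :
  (forall u v, u < v -> F u < F v) -> F q = al -> (x <= q <-> F x <= al).
Proof.
  intros Hinc Hq. split.
  - intros [Hlt | ->]; [left; rewrite <- Hq; apply Hinc, Hlt | lra].
  - intros Hle. apply Rnot_lt_le. intros Hlt. pose proof (Hinc _ _ Hlt). lra.
Qed.

Lemma exp_le (x y : R) : x <= y -> exp x <= exp y.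
Proof. intros [H | ->]; [left; apply exp_increasing, H | lra]. Qed.

Lemma exp_ge_near_zero (c s r : R) : 0 < s -> r < 1 ->
  exists d, 0 < d /\ r <= exp (d * (c - d) / s).
Proof.
  intros Hs Hr. set (K := Rabs c + 1).
  assert (HK : 1 <= K) by (pose proof (Rabs_pos c); unfold K; lra).
  set (d := Rmin 1 ((1 - r) * s / K)).
  assert (Hd0 : 0 < d) by (apply Rmin_glb_lt; [lra | apply Rdiv_lt_0_compat; nra]).
  assert (HdK : d * K <= (1 - r) * s).
  { pose proof (Rmin_r 1 ((1 - r) * s / K)) as Hd. fold d in Hd.
    apply Rmult_le_compat_r with (r := K) in Hd; [| lra].
    replace ((1 - r) * s / K * K) with ((1 - r) * s) in Hd by (field; lra). exact Hd. }
  assert (Hcd : - K <= c - d).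
  { pose proof (Rmin_l 1 ((1 - r) * s / K)). pose proof (Rle_abs (- c)).
    rewrite Rabs_Ropp in H0. fold d in H. unfold K. lra. }
  exists d. split; [exact Hd0 |].
  assert (Hq : - ((1 - r) * s) <= d * (c - d)) by nra.
  apply Rmult_le_compat_r with (r := / s) in Hq; [| left; apply Rinv_0_lt_compat, Hs].
  replace (- ((1 - r) * s) * / s) with (r - 1) in Hq by (field; lra).
  apply Rle_trans with (1 + d * (c - d) / s); [unfold Rdiv; lra | apply exp_ineq1_le].
Qed.

(* Coquelicot's generic rules, specialised so that they apply to goals stated with Rplus, Rmult, ... *)
Lemma is_derive_Rplus (f g : R -> R) (x a b : R) :
  is_derive f x a -> is_derive g x b -> is_derive (fun y => f y + g y) x (a + b).
Proof. exact (@is_derive_plus R_AbsRing R_NormedModule f g x a b). Qed.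

Lemma is_derive_Rminus (f g : R -> R) (x a b : R) :
  is_derive f x a -> is_derive g x b -> is_derive (fun y => f y - g y) x (a - b).
Proof. exact (@is_derive_minus R_AbsRing R_NormedModule f g x a b). Qed.

Lemma is_derive_Ropp (f : R -> R) (x a : R) :
  is_derive f x a -> is_derive (fun y => - f y) x (- a).
Proof. exact (@is_derive_opp R_AbsRing R_NormedModule f x a). Qed.

Lemma is_derive_Rmult (f g : R -> R) (x a b : R) :
  is_derive f x a -> is_derive g x b -> is_derive (fun y => f y * g y) x (a * g x + f x * b).
Proof. intros Hf Hg. apply (is_derive_mult f g x a b Hf Hg Rmult_comm). Qed.

Lemma is_derive_Rcomp (F g : R -> R) (x a b : R) :
  is_derive F (g x) a -> is_derive g x b -> is_derive (fun y => F (g y)) x (b * a).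
Proof. exact (@is_derive_comp R_AbsRing R_NormedModule F g x a b). Qed.

Lemma is_derive_comp_affine (F : R -> R) (c s x l : R) : s <> 0 ->
  is_derive F ((x - c) / s) l -> is_derive (fun y => F ((y - c) / s)) x (l / s).
Proof.
  intros Hs HF. replace (l / s) with ((1 / s) * l) by (field; auto).
  apply is_derive_Rcomp; auto. auto_derive; auto.
Qed.

(** * Limits and improper integrals *)

Definition continuous_everywhere (f : R -> R) := forall x, continuous f x.

Lemma continuous_everywhere_of_derive (f : R -> R) :
  (forall x, ex_derive f x) -> continuous_everywhere f.
Proof. intros H x. apply (@ex_derive_continuous R_AbsRing R_NormedModule), H. Qed.

Lemma continuous_everywhere_mult (f g : R -> R) :
  continuous_everywhere f -> continuous_everywhere g -> continuous_everywhere (fun x => f x * g x).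
Proof. intros Hf Hg x. apply (continuous_mult f g); auto. Qed.

Lemma exp_affine_scal_continuous (K c d : R) :
  continuous_everywhere (fun x => K * exp (c * x + d)).
Proof.
  apply continuous_everywhere_of_derive. intros x. eexists. auto_derive; auto.
Qed.

Lemma RInt_exp_affine_scal (K c d a b : R) : c <> 0 ->
  RInt (fun x => K * exp (c * x + d)) a b = K * (exp (c * b + d) - exp (c * a + d)) / c :> R.
Proof.
  intros Hc. apply is_RInt_unique.
  replace (K * (exp (c * b + d) - exp (c * a + d)) / c)
    with (K * exp (c * b + d) / c - K * exp (c * a + d) / c) by (field; exact Hc).
  apply (@is_RInt_derive R_CompleteNormedModule (fun x => K * exp (c * x + d) / c)).
  - intros x _. auto_derive; auto. field. exact Hc.
  - intros x _. apply exp_affine_scal_continuous.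
Qed.

Lemma is_lim_le_of_near (g : R -> R) (x : Rbar) (l M : R) :
  Rbar_locally' x (fun y => g y <= M) -> is_lim g x l -> l <= M.
Proof.
  intros Hnear Hg.
  exact (is_lim_le_loc g (fun _ => M) x l M Hnear Hg (is_lim_const M x)).
Qed.

Lemma is_lim_ge_of_near (g : R -> R) (x : Rbar) (l M : R) :
  Rbar_locally' x (fun y => M <= g y) -> is_lim g x l -> M <= l.
Proof.
  intros Hnear Hg.
  exact (is_lim_le_loc (fun _ => M) g x M l Hnear (is_lim_const M x) Hg).
Qed.

Lemma is_lim_0_squeeze (f g : R -> R) (x : Rbar) :
  Rbar_locally' x (fun y => 0 <= f y <= g y) -> is_lim g x 0 -> is_lim f x 0.
Proof. intros Hfg Hg. apply is_lim_le_le_loc with (fun _ => 0) g; auto. apply is_lim_const. Qed.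

Lemma is_lim_exp_affine_m (c d : R) : 0 < c -> is_lim (fun x => exp (c * x + d)) m_infty 0.
Proof.
  intros Hc. apply (is_lim_comp exp (fun x => c * x + d) m_infty 0 m_infty).
  - apply is_lim_exp_m.
  - eapply is_lim_plus.
    + apply is_lim_scal_l, is_lim_id.
    + apply is_lim_const.
    + simpl. case Rle_dec; [intros H; case Rle_lt_or_eq_dec; [easy | intros; exfalso; lra] |].
      intros; exfalso; lra.
  - exists 0. easy.
Qed.

Lemma is_lim_exp_affine_p (c d : R) : c < 0 -> is_lim (fun x => exp (c * x + d)) p_infty 0.
Proof.
  intros Hc. apply (is_lim_comp exp (fun x => c * x + d) p_infty 0 m_infty).
  - apply is_lim_exp_m.
  - eapply is_lim_plus.
    + apply is_lim_scal_l, is_lim_id.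
    + apply is_lim_const.
    + simpl. case Rle_dec; [intros; exfalso; lra | easy].
  - exists 0. easy.
Qed.

Definition is_RInt_minfty (f : R -> R) (b l : R) := is_lim (fun a => RInt f a b) m_infty l.
Definition is_RInt_pinfty (f : R -> R) (a l : R) := is_lim (fun b => RInt f a b) p_infty l.

Lemma is_RInt_gen_zero (Fa Fb : (R -> Prop) -> Prop) {FFa : Filter Fa} {FFb : Filter Fb} :
  is_RInt_gen (fun _ => 0) Fa Fb 0.
Proof.
  intros P HP. apply (filter_forall (F := filter_prod Fa Fb)). intros ab.
  exists (scal (snd ab - fst ab) 0). split; [apply (@is_RInt_const R_NormedModule) |].
  unfold scal; simpl; unfold mult; simpl. rewrite Rmult_0_r. apply locally_singleton, HP.
Qed.

Lemma is_RInt_minfty_unique (f : R -> R) (b l1 l2 : R) :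
  is_RInt_minfty f b l1 -> is_RInt_minfty f b l2 -> l1 = l2.
Proof.
  intros H1 H2. apply is_lim_unique in H1. apply is_lim_unique in H2.
  rewrite H1 in H2. now injection H2.
Qed.

Lemma RInt_gt_of_is_RInt_minfty (f : R -> R) (b l v : R) :
  is_RInt_minfty f b l -> v < l -> exists a, a < b /\ v < RInt f a b.
Proof.
  intros H Hv.
  apply (proj1 (filterlim_locally _ _)) with (eps := mkposreal _ (proj2 (Rlt_0_minus _ _) Hv)) in H.
  destruct H as [M HM].
  exists (Rmin (M - 1) (b - 1)). split; [pose proof (Rmin_r (M - 1) (b - 1)); lra |].
  assert (Hball : Rabs (RInt f (Rmin (M - 1) (b - 1)) b - l) < l - v).
  { apply HM. pose proof (Rmin_l (M - 1) (b - 1)). lra. }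
  apply Rabs_def2 in Hball. lra.
Qed.

Lemma ex_RInt_continuous_everywhere (f : R -> R) (a b : R) :
  continuous_everywhere f -> ex_RInt f a b.
Proof. intros Hf. apply (@ex_RInt_continuous R_CompleteNormedModule); intros; apply Hf. Qed.

Section ContinuousIntegrand.

Variable f : R -> R.
Hypothesis f_cont : continuous_everywhere f.

Lemma RInt_Chasles_continuous (a b c : R) : RInt f a b + RInt f b c = RInt f a c.
Proof. apply (RInt_Chasles f a b c); apply ex_RInt_continuous_everywhere, f_cont. Qed.

Lemma RInt_ge0_continuous (a b : R) :
  a <= b -> (forall x, a <= x <= b -> 0 <= f x) -> 0 <= RInt f a b.
Proof.
  intros Hab Hf. apply RInt_ge_0; auto.
  - apply ex_RInt_continuous_everywhere, f_cont.
  - intros; apply Hf; lra.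
Qed.

Lemma RInt_gt0_continuous (a b : R) :
  a < b -> (forall x, a < x < b -> 0 < f x) -> 0 < RInt f a b.
Proof.
  intros Hab Hf. apply Rle_lt_trans with (RInt (fun _ => 0) a b).
  - rewrite RInt_const. unfold scal; simpl; unfold mult; simpl. lra.
  - apply RInt_lt; auto; intros; first [apply continuous_const | apply f_cont].
Qed.

Lemma RInt_of_derive (G : R -> R) (a b : R) :
  (forall x, is_derive G x (f x)) -> RInt f a b = G b - G a :> R.
Proof.
  intros HG. apply is_RInt_unique, (@is_RInt_derive R_CompleteNormedModule G f).
  - intros; apply HG.
  - intros; apply f_cont.
Qed.

Lemma is_RInt_gen_of_minfty (b l : R) :
  is_RInt_minfty f b l -> is_RInt_gen f (Rbar_locally m_infty) (at_point b) l.
Proof.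
  intros H P HP.
  apply Filter_prod with (fun a => P (RInt f a b)) (fun y => y = b).
  - apply H, HP.
  - reflexivity.
  - intros a y Ha ->. exists (RInt f a b). split; [|exact Ha].
    apply (@RInt_correct R_CompleteNormedModule), ex_RInt_continuous_everywhere, f_cont.
Qed.

Lemma is_RInt_gen_of_pinfty (a l : R) :
  is_RInt_pinfty f a l -> is_RInt_gen f (at_point a) (Rbar_locally p_infty) l.
Proof.
  intros H P HP.
  apply Filter_prod with (fun y => y = a) (fun b => P (RInt f a b)).
  - reflexivity.
  - apply H, HP.
  - intros y b -> Hb. exists (RInt f a b). split; [|exact Hb].
    apply (@RInt_correct R_CompleteNormedModule), ex_RInt_continuous_everywhere, f_cont.
Qed.

Lemma is_RInt_minfty_Chasles (b c l : R) :
  is_RInt_minfty f b l -> is_RInt_minfty f c (l + RInt f b c).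
Proof.
  intros H. apply is_lim_ext with (fun a => RInt f a b + RInt f b c).
  - intros a. apply RInt_Chasles_continuous.
  - apply is_lim_plus'; [exact H | apply is_lim_const].
Qed.

Lemma is_RInt_pinfty_Chasles (a c l : R) :
  is_RInt_pinfty f a l -> is_RInt_pinfty f c (RInt f c a + l).
Proof.
  intros H. apply is_lim_ext with (fun b => RInt f c a + RInt f a b).
  - intros b. apply RInt_Chasles_continuous.
  - apply is_lim_plus'; [apply is_lim_const | exact H].
Qed.

Lemma is_RInt_minfty_of_derive (G : R -> R) (g0 b : R) :
  (forall x, is_derive G x (f x)) -> is_lim G m_infty g0 -> is_RInt_minfty f b (G b - g0).
Proof.
  intros HG Hlim. apply is_lim_ext with (fun a => G b - G a).
  - intros a. symmetry. apply RInt_of_derive, HG.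
  - apply is_lim_minus'; [apply is_lim_const | exact Hlim].
Qed.

Lemma is_RInt_pinfty_of_derive (G : R -> R) (g1 a : R) :
  (forall x, is_derive G x (f x)) -> is_lim G p_infty g1 -> is_RInt_pinfty f a (g1 - G a).
Proof.
  intros HG Hlim. apply is_lim_ext with (fun b => G b - G a).
  - intros b. symmetry. apply RInt_of_derive, HG.
  - apply is_lim_minus'; [exact Hlim | apply is_lim_const].
Qed.

Lemma RInt_le_minfty (b l : R) : (forall x, x <= b -> 0 <= f x) ->
  is_RInt_minfty f b l -> forall a, a <= b -> RInt f a b <= l.
Proof.
  intros Hf H a Ha. apply (is_lim_ge_of_near (fun a => RInt f a b) m_infty); [|exact H].
  exists a. intros a' Ha'.
  rewrite <- (RInt_Chasles_continuous a' a b).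
  assert (0 <= RInt f a' a) by (apply RInt_ge0_continuous; [lra | intros; apply Hf; lra]).
  lra.
Qed.

Lemma RInt_le_pinfty (a l : R) : (forall x, a <= x -> 0 <= f x) ->
  is_RInt_pinfty f a l -> forall b, a <= b -> RInt f a b <= l.
Proof.
  intros Hf H b Hb. apply (is_lim_ge_of_near (fun b => RInt f a b) p_infty); [|exact H].
  exists b. intros b' Hb'.
  rewrite <- (RInt_Chasles_continuous a b b').
  assert (0 <= RInt f b b') by (apply RInt_ge0_continuous; [lra | intros; apply Hf; lra]).
  lra.
Qed.

Lemma is_RInt_minfty_ex (b M : R) : (forall x, x <= b -> 0 <= f x) ->
  (forall a, a <= b -> RInt f a b <= M) -> exists l, is_RInt_minfty f b l.
Proof.
  intros Hf HM.
  set (E := fun v => exists a, a <= b /\ v = RInt f a b).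
  assert (HE : exists v, E v) by (exists (RInt f b b), b; split; [lra | auto]).
  assert (HB : bound E) by (exists M; intros v [a [Ha ->]]; apply HM, Ha).
  destruct (completeness E HB HE) as [l [Hub Hlub]].
  exists l. apply filterlim_locally. intros eps.
  assert (Ha0 : exists a0, a0 <= b /\ l - eps < RInt f a0 b).
  { apply NNPP. intros Hn.
    assert (l <= l - eps).
    { apply Hlub. intros v [a [Ha ->]]. apply Rnot_lt_le. intros Hlt.
      apply Hn. exists a. split; auto. }
    destruct eps; simpl in *; lra. }
  destruct Ha0 as [a0 [Ha0 Hl]].
  exists a0. intros x Hx. change (Rabs (RInt f x b - l) < eps).
  assert (RInt f x b <= l) by (apply Hub; exists x; split; [lra | auto]).
  assert (0 <= RInt f x a0) by (apply RInt_ge0_continuous; [lra | intros; apply Hf; lra]).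
  rewrite <- (RInt_Chasles_continuous x a0 b) in *.
  apply Rabs_def1; lra.
Qed.

Lemma is_RInt_pinfty_ex (a M : R) : (forall x, a <= x -> 0 <= f x) ->
  (forall b, a <= b -> RInt f a b <= M) -> exists l, is_RInt_pinfty f a l.
Proof.
  intros Hf HM.
  set (E := fun v => exists b, a <= b /\ v = RInt f a b).
  assert (HE : exists v, E v) by (exists (RInt f a a), a; split; [lra | auto]).
  assert (HB : bound E) by (exists M; intros v [b [Hb ->]]; apply HM, Hb).
  destruct (completeness E HB HE) as [l [Hub Hlub]].
  exists l. apply filterlim_locally. intros eps.
  assert (Hb0 : exists b0, a <= b0 /\ l - eps < RInt f a b0).
  { apply NNPP. intros Hn.
    assert (l <= l - eps).
    { apply Hlub. intros v [b [Hb ->]]. apply Rnot_lt_le. intros Hlt.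
      apply Hn. exists b. split; auto. }
    destruct eps; simpl in *; lra. }
  destruct Hb0 as [b0 [Hb0 Hl]].
  exists b0. intros x Hx. change (Rabs (RInt f a x - l) < eps).
  assert (RInt f a x <= l) by (apply Hub; exists x; split; [lra | auto]).
  assert (0 <= RInt f b0 x) by (apply RInt_ge0_continuous; [lra | intros; apply Hf; lra]).
  rewrite <- (RInt_Chasles_continuous a b0 x) in *.
  apply Rabs_def1; lra.
Qed.

Lemma is_RInt_minfty_exp_dominated (b K c d : R) : 0 < c ->
  (forall x, x <= b -> 0 <= f x <= K * exp (c * x + d)) ->
  exists l, is_RInt_minfty f b l /\ l <= K * exp (c * b + d) / c.
Proof.
  intros Hc Hf.
  assert (HK : 0 <= K) by (destruct (Hf b (Rle_refl b)); pose proof (exp_pos (c * b + d)); nra).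
  assert (Hbound : forall a, a <= b -> RInt f a b <= K * exp (c * b + d) / c).
  { intros a Ha. apply Rle_trans with (RInt (fun x => K * exp (c * x + d)) a b).
    - apply RInt_le; auto.
      + apply ex_RInt_continuous_everywhere, f_cont.
      + apply ex_RInt_continuous_everywhere, exp_affine_scal_continuous.
      + intros x Hx. apply Hf. lra.
    - rewrite RInt_exp_affine_scal by lra. pose proof (exp_pos (c * a + d)).
      apply Rmult_le_compat_r; [left; apply Rinv_0_lt_compat; lra | nra]. }
  destruct (is_RInt_minfty_ex b _ (fun x Hx => proj1 (Hf x Hx)) Hbound) as [l Hl].
  exists l. split; [exact Hl |].
  apply (is_lim_le_of_near (fun a => RInt f a b) m_infty); [| exact Hl].
  exists b. intros a Ha. apply Hbound. lra.
Qed.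

Lemma is_RInt_pinfty_exp_dominated (a K c d : R) : c < 0 ->
  (forall x, a <= x -> 0 <= f x <= K * exp (c * x + d)) -> exists l, is_RInt_pinfty f a l.
Proof.
  intros Hc Hf.
  assert (HK : 0 <= K) by (destruct (Hf a (Rle_refl a)); pose proof (exp_pos (c * a + d)); nra).
  apply (is_RInt_pinfty_ex a (- K * exp (c * a + d) / c)); [intros x Hx; apply Hf, Hx |].
  intros b Hb. apply Rle_trans with (RInt (fun x => K * exp (c * x + d)) a b).
  - apply RInt_le; auto.
    + apply ex_RInt_continuous_everywhere, f_cont.
    + apply ex_RInt_continuous_everywhere, exp_affine_scal_continuous.
    + intros x Hx. apply Hf. lra.
  - rewrite RInt_exp_affine_scal by lra. pose proof (exp_pos (c * b + d)).
    assert (/ c < 0) by (apply Rinv_lt_0_compat, Hc).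
    assert (0 <= K * exp (c * b + d)) by nra.
    unfold Rdiv. nra.
Qed.

Lemma is_RInt_minfty_gt0 (a b l : R) : a < b -> (forall x, x <= b -> 0 <= f x) ->
  (forall x, a < x < b -> 0 < f x) -> is_RInt_minfty f b l -> 0 < l.
Proof.
  intros Hab Hf Hpos H. apply Rlt_le_trans with (RInt f a b).
  - apply RInt_gt0_continuous; auto.
  - apply (RInt_le_minfty b); auto; lra.
Qed.

Lemma is_RInt_pinfty_gt0 (a b l : R) : a < b -> (forall x, a <= x -> 0 <= f x) ->
  (forall x, a < x < b -> 0 < f x) -> is_RInt_pinfty f a l -> 0 < l.
Proof.
  intros Hab Hf Hpos H. apply Rlt_le_trans with (RInt f a b).
  - apply RInt_gt0_continuous; auto.
  - apply (RInt_le_pinfty a); auto; lra.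
Qed.

Lemma RInt_le_minfty_pinfty (c l0 l1 : R) : (forall x, 0 <= f x) ->
  is_RInt_minfty f c l0 -> is_RInt_pinfty f c l1 -> forall a b, a <= b -> RInt f a b <= l0 + l1.
Proof.
  intros Hf H0 H1 a b Hab.
  set (a' := Rmin a c). set (b' := Rmax b c).
  assert (RInt f a' a + RInt f a b + RInt f b b' = RInt f a' c + RInt f c b').
  { rewrite !RInt_Chasles_continuous. reflexivity. }
  assert (0 <= RInt f a' a) by (apply RInt_ge0_continuous; [apply Rmin_l | auto]).
  assert (0 <= RInt f b b') by (apply RInt_ge0_continuous; [apply Rmax_l | auto]).
  assert (RInt f a' c <= l0) by (apply (RInt_le_minfty c); auto; apply Rmin_r).
  assert (RInt f c b' <= l1) by (apply (RInt_le_pinfty c); auto; apply Rmax_r).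
  lra.
Qed.

Lemma is_RInt_minfty_pinfty_le (c l0 l1 M : R) :
  is_RInt_minfty f c l0 -> is_RInt_pinfty f c l1 ->
  (forall a b, a <= b -> RInt f a b <= M) -> l0 + l1 <= M.
Proof.
  intros H0 H1 HM.
  assert (Hleft : forall a, a < c -> RInt f a c + l1 <= M).
  { intros a Ha. apply (is_lim_le_of_near (fun b => RInt f a c + RInt f c b) p_infty).
    - exists c. intros b Hb. rewrite RInt_Chasles_continuous. apply HM. lra.
    - apply is_lim_plus'; [apply is_lim_const | exact H1]. }
  apply (is_lim_le_of_near (fun a => RInt f a c + l1) m_infty).
  - exists c. exact Hleft.
  - apply is_lim_plus'; [exact H0 | apply is_lim_const].
Qed.

End ContinuousIntegrand.

Section TwoIntegrands.

Variables f g : R -> R.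
Hypotheses (f_cont : continuous_everywhere f) (g_cont : continuous_everywhere g).

Lemma continuous_everywhere_lincomb (c d : R) : continuous_everywhere (fun x => c * f x + d * g x).
Proof.
  intros x. apply (continuous_plus (fun x => c * f x) (fun x => d * g x));
    [apply (continuous_scal_r c f) | apply (continuous_scal_r d g)]; auto.
Qed.

Lemma RInt_lincomb (c d a b : R) :
  RInt (fun x => c * f x + d * g x) a b = c * RInt f a b + d * RInt g a b.
Proof.
  assert (Hf := ex_RInt_continuous_everywhere f a b f_cont).
  assert (Hg := ex_RInt_continuous_everywhere g a b g_cont).
  transitivity (RInt (fun x => c * f x) a b + RInt (fun x => d * g x) a b).
  - apply (RInt_plus (fun x => c * f x) (fun x => d * g x) a b);
      [apply (ex_RInt_scal f a b c Hf) | apply (ex_RInt_scal g a b d Hg)].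
  - f_equal; [apply (RInt_scal f a b c Hf) | apply (RInt_scal g a b d Hg)].
Qed.

Lemma is_RInt_minfty_lincomb (c d b l1 l2 : R) :
  is_RInt_minfty f b l1 -> is_RInt_minfty g b l2 ->
  is_RInt_minfty (fun x => c * f x + d * g x) b (c * l1 + d * l2).
Proof.
  intros H1 H2. apply is_lim_ext with (fun a => c * RInt f a b + d * RInt g a b).
  - intros a. symmetry. apply RInt_lincomb.
  - apply is_lim_plus';
      [apply (is_lim_scal_l _ c m_infty l1) | apply (is_lim_scal_l _ d m_infty l2)]; auto.
Qed.

Lemma is_RInt_pinfty_lincomb (c d a l1 l2 : R) :
  is_RInt_pinfty f a l1 -> is_RInt_pinfty g a l2 ->
  is_RInt_pinfty (fun x => c * f x + d * g x) a (c * l1 + d * l2).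
Proof.
  intros H1 H2. apply is_lim_ext with (fun b => c * RInt f a b + d * RInt g a b).
  - intros b. symmetry. apply RInt_lincomb.
  - apply is_lim_plus';
      [apply (is_lim_scal_l _ c p_infty l1) | apply (is_lim_scal_l _ d p_infty l2)]; auto.
Qed.

End TwoIntegrands.

(* Tilting a positive density by an increasing factor moves mass to the right of th. *)
Lemma tilted_cdf_lt (p h ph : R -> R) (th A B Ah Bh : R) :
  continuous_everywhere p -> continuous_everywhere ph -> (forall x, 0 < p x) ->
  (forall x z, x < z -> h x < h z) -> (forall x, ph x = p x * h x) ->
  is_RInt_minfty p th A -> is_RInt_pinfty p th B ->
  is_RInt_minfty ph th Ah -> is_RInt_pinfty ph th Bh ->
  0 < Ah + Bh -> Ah / (Ah + Bh) < A / (A + B).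
Proof.
  intros Hpc Hphc Hp Hh Hph HA HB HAh HBh Hs.
  assert (Hp0 : forall x, 0 <= p x) by (intros; left; auto).
  assert (A0 : 0 < A) by (apply (is_RInt_minfty_gt0 p Hpc (th - 1) th); auto; lra).
  assert (B0 : 0 < B) by (apply (is_RInt_pinfty_gt0 p Hpc th (th + 1)); auto; lra).
  assert (Hh_le : forall x z, x <= z -> h x <= h z) by (intros x z [Hxz | ->]; [left; auto | lra]).
  assert (Hleft : 0 < h th * A + (-1) * Ah).
  { apply (is_RInt_minfty_gt0 _ (continuous_everywhere_lincomb p ph Hpc Hphc (h th) (-1))
             (th - 1) th); [lra | | | apply is_RInt_minfty_lincomb; auto].
    - intros x Hx. rewrite Hph. pose proof (Hh_le x th Hx). pose proof (Hp x). nra.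
    - intros x Hx. rewrite Hph. pose proof (Hh x th ltac:(lra)). pose proof (Hp x). nra. }
  assert (Hright : 0 < - h th * B + 1 * Bh).
  { apply (is_RInt_pinfty_gt0 _ (continuous_everywhere_lincomb p ph Hpc Hphc (- h th) 1)
             th (th + 1)); [lra | | | apply is_RInt_pinfty_lincomb; auto].
    - intros x Hx. rewrite Hph. pose proof (Hh_le th x Hx). pose proof (Hp x). nra.
    - intros x Hx. rewrite Hph. pose proof (Hh th x ltac:(lra)). pose proof (Hp x). nra. }
  apply Rlt_0_minus.
  replace (A / (A + B) - Ah / (Ah + Bh)) with ((A * Bh - Ah * B) / ((A + B) * (Ah + Bh)))
    by (field; lra).
  apply Rdiv_lt_0_compat; nra.
Qed.

(** * The standard normal distribution *)

Notation phi := std_normal_pdf.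
Notation Phi := std_normal_cdf.

Lemma sqrt_2PI_ge_2 : 2 <= sqrt (2 * PI).
Proof.
  rewrite <- (sqrt_square 2) at 1 by lra. apply sqrt_le_1_alt.
  pose proof PI2_3_2. lra.
Qed.

Lemma phi_pos (x : R) : 0 < phi x.
Proof.
  apply Rdiv_lt_0_compat; [apply exp_pos |]. pose proof sqrt_2PI_ge_2. lra.
Qed.

Lemma phi_neq0 (x : R) : phi x <> 0.
Proof. apply Rgt_not_eq, phi_pos. Qed.

Lemma phi_le_half_exp (x : R) : phi x <= exp (- (x ^ 2) / 2) / 2.
Proof.
  pose proof sqrt_2PI_ge_2. pose proof (exp_pos (- (x ^ 2) / 2)).
  apply Rmult_le_compat_l; [lra |]. apply Rinv_le_contravar; lra.
Qed.

Lemma phi_le_half (x : R) : phi x <= 1 / 2.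
Proof.
  pose proof (phi_le_half_exp x). pose proof (exp_le (- (x ^ 2) / 2) 0).
  rewrite exp_0 in H0. assert (0 <= x ^ 2) by apply pow2_ge_0. lra.
Qed.

Lemma phi_le_exp_affine (x : R) : phi x <= exp (1 * x + 1 / 2).
Proof.
  pose proof (phi_le_half_exp x). pose proof (exp_pos (- (x ^ 2) / 2)).
  pose proof (exp_le (- (x ^ 2) / 2) (1 * x + 1 / 2)). pose proof (pow2_ge_0 (x + 1)).
  simpl in *. nra.
Qed.

Lemma phi_le_exp_neg_affine (x : R) : phi x <= exp (-1 * x + 1 / 2).
Proof.
  pose proof (phi_le_half_exp x). pose proof (exp_pos (- (x ^ 2) / 2)).
  pose proof (exp_le (- (x ^ 2) / 2) (-1 * x + 1 / 2)). pose proof (pow2_ge_0 (x - 1)).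
  simpl in *. nra.
Qed.

Lemma phi_deriv (x : R) : is_derive phi x (- x * phi x).
Proof.
  unfold std_normal_pdf. auto_derive; auto.
  replace (- (x * (x * 1)) * / 2) with (- x ^ 2 / 2) by (simpl; field).
  field. pose proof sqrt_2PI_ge_2. lra.
Qed.

Lemma phi_continuous : continuous_everywhere phi.
Proof. apply continuous_everywhere_of_derive. intros x. eexists. apply phi_deriv. Qed.

Lemma phi_opp (x : R) : phi (- x) = phi x.
Proof. unfold std_normal_pdf. now replace ((- x) ^ 2) with (x ^ 2) by ring. Qed.

Lemma phi_ratio (a b : R) : phi a = phi b * exp ((b ^ 2 - a ^ 2) / 2).
Proof.
  unfold std_normal_pdf, Rdiv.
  rewrite Rmult_assoc, (Rmult_comm (/ _)), <- Rmult_assoc, <- exp_plus.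
  do 2 f_equal. field.
Qed.

Lemma phi_le_neg (u v : R) : u <= v <= 0 -> phi u <= phi v.
Proof.
  intros H. rewrite (phi_ratio u v). pose proof (phi_pos v).
  pose proof (exp_le ((v ^ 2 - u ^ 2) / 2) 0). rewrite exp_0 in H1. nra.
Qed.

Lemma phi_le_pos (u v : R) : 0 <= u <= v -> phi v <= phi u.
Proof.
  intros H. rewrite (phi_ratio v u). pose proof (phi_pos u).
  pose proof (exp_le ((u ^ 2 - v ^ 2) / 2) 0). rewrite exp_0 in H1. nra.
Qed.

Lemma is_lim_phi_m : is_lim phi m_infty 0.
Proof.
  apply is_lim_0_squeeze with (fun x => exp (1 * x + 1 / 2)).
  - apply filter_forall. intros x. split; [left; apply phi_pos | apply phi_le_exp_affine].
  - apply is_lim_exp_affine_m. lra.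
Qed.

Lemma phi_is_RInt_minfty_bounded (x : R) :
  exists l, is_RInt_minfty phi x l /\ l <= exp (1 * x + 1 / 2).
Proof.
  destruct (is_RInt_minfty_exp_dominated phi phi_continuous x 1 1 (1 / 2)) as [l [Hl Hle]];
    [lra | |].
  - intros u _. split; [left; apply phi_pos | rewrite Rmult_1_l; apply phi_le_exp_affine].
  - exists l. split; [exact Hl | lra].
Qed.

Lemma Phi_is_RInt_minfty (x : R) : is_RInt_minfty phi x (Phi x).
Proof.
  destruct (phi_is_RInt_minfty_bounded x) as [l [Hl _]].
  replace (Phi x) with l; [exact Hl |].
  symmetry. apply is_RInt_gen_unique, is_RInt_gen_of_minfty; [apply phi_continuous | exact Hl].
Qed.

Lemma Phi_pos (x : R) : 0 < Phi x.
Proof.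
  apply (is_RInt_minfty_gt0 phi phi_continuous (x - 1) x); [lra | | | apply Phi_is_RInt_minfty];
    intros; [left |]; apply phi_pos.
Qed.

Lemma Phi_neq0 (x : R) : Phi x <> 0.
Proof. apply Rgt_not_eq, Phi_pos. Qed.

Lemma Phi_le_exp_affine (x : R) : Phi x <= exp (1 * x + 1 / 2).
Proof.
  destruct (phi_is_RInt_minfty_bounded x) as [l [Hl Hle]].
  rewrite (is_RInt_minfty_unique phi x _ _ (Phi_is_RInt_minfty x) Hl). lra.
Qed.

Lemma is_lim_Phi_m : is_lim Phi m_infty 0.
Proof.
  apply is_lim_0_squeeze with (fun x => exp (1 * x + 1 / 2)).
  - apply filter_forall. intros x. split; [left; apply Phi_pos | apply Phi_le_exp_affine].
  - apply is_lim_exp_affine_m. lra.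
Qed.

Lemma Phi_Chasles (b c : R) : Phi c = Phi b + RInt phi b c.
Proof.
  apply (is_RInt_minfty_unique phi c); [apply Phi_is_RInt_minfty |].
  apply is_RInt_minfty_Chasles; [apply phi_continuous | apply Phi_is_RInt_minfty].
Qed.

Lemma Phi_deriv (x : R) : is_derive Phi x (phi x).
Proof.
  apply is_derive_ext with (fun y => Phi 0 + RInt phi 0 y).
  { intros y. symmetry. apply Phi_Chasles. }
  replace (phi x) with (0 + phi x) by ring.
  apply is_derive_Rplus; [apply (@is_derive_const R_AbsRing R_NormedModule) |].
  apply (@is_derive_RInt R_NormedModule phi (RInt phi 0) 0).
  - apply filter_forall. intros y.
    apply (@RInt_correct R_CompleteNormedModule), ex_RInt_continuous_everywhere, phi_continuous.
  - apply phi_continuous.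
Qed.

Lemma Phi_lt (a b : R) : a < b -> Phi a < Phi b.
Proof.
  intros H. rewrite (Phi_Chasles a b).
  pose proof (RInt_gt0_continuous phi phi_continuous a b H (fun x _ => phi_pos x)). lra.
Qed.

Lemma Phi_le (a b : R) : a <= b -> Phi a <= Phi b.
Proof. intros [H | ->]; [left; apply Phi_lt, H | lra]. Qed.

Lemma Phi_lipschitz (a b : R) : a <= b -> Phi b - Phi a <= (b - a) / 2.
Proof.
  intros H. rewrite (Phi_Chasles a b).
  assert (RInt phi a b <= RInt (fun _ => 1 / 2) a b).
  { apply RInt_le; auto.
    - apply ex_RInt_continuous_everywhere, phi_continuous.
    - apply ex_RInt_const.
    - intros; apply phi_le_half. }
  rewrite RInt_const in H0. unfold scal in H0; simpl in H0; unfold mult in H0; simpl in H0. lra.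
Qed.

Lemma Phi_ge_mult_phi (b w : R) : b <= 0 -> 0 <= w -> w * phi (b - w) <= Phi b.
Proof.
  intros Hb Hw. rewrite (Phi_Chasles (b - w) b).
  assert (RInt (fun _ => phi (b - w)) (b - w) b <= RInt phi (b - w) b).
  { apply RInt_le; [lra | apply ex_RInt_const | apply ex_RInt_continuous_everywhere, phi_continuous |].
    intros u Hu. apply phi_le_neg. lra. }
  rewrite RInt_const in H. unfold scal in H; simpl in H; unfold mult in H; simpl in H.
  pose proof (Phi_pos (b - w)). replace (b - (b - w)) with w in H by ring. lra.
Qed.

Lemma Phi_sub_le_pos (a b : R) : 0 <= a <= b -> Phi b - Phi a <= (b - a) * phi a.
Proof.
  intros Hab. rewrite (Phi_Chasles a b).
  assert (RInt phi a b <= RInt (fun _ => phi a) a b).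
  { apply RInt_le; [lra | apply ex_RInt_continuous_everywhere, phi_continuous | apply ex_RInt_const |].
    intros u Hu. apply phi_le_pos. lra. }
  rewrite RInt_const in H. unfold scal in H; simpl in H; unfold mult in H; simpl in H. lra.
Qed.

(** * Mills ratio *)

Lemma id_mult_phi_continuous : continuous_everywhere (fun u => u * phi u).
Proof.
  apply continuous_everywhere_of_derive. intros u. eexists.
  apply (is_derive_Rmult (fun u => u) phi); [apply (@is_derive_id R_AbsRing) | apply phi_deriv].
Qed.

Lemma Phi_lt_phi_div_opp (x : R) : x < 0 -> Phi x < phi x / (- x).
Proof.
  intros Hx.
  assert (Hfirst : is_RInt_minfty (fun u => u * phi u) x (- phi x - 0)).
  { apply (is_RInt_minfty_of_derive _ id_mult_phi_continuous (fun u => - phi u)).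
    - intros u. replace (u * phi u) with (- (- u * phi u)) by ring.
      apply is_derive_Ropp, phi_deriv.
    - replace (Finite 0) with (Rbar_opp 0) by (simpl; f_equal; ring).
      apply is_lim_opp, is_lim_phi_m. }
  (* Phi x = int_{u < x} phi u < int_{u < x} (u / x) phi u = phi x / (- x), as u / x > 1 there. *)
  assert (Hgap : 0 < / x * (- phi x - 0) + -1 * Phi x).
  { apply (is_RInt_minfty_gt0 _ (continuous_everywhere_lincomb _ _ id_mult_phi_continuous
             phi_continuous (/ x) (-1)) (x - 1) x); [lra | | |].
    - intros u Hu. pose proof (phi_pos u).
      replace (/ x * (u * phi u) + -1 * phi u) with ((x - u) / (- x) * phi u) by (field; lra).
      apply Rmult_le_pos; [apply Rdiv_le_0_compat |]; lra.
    - intros u Hu. pose proof (phi_pos u).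
      replace (/ x * (u * phi u) + -1 * phi u) with ((x - u) / (- x) * phi u) by (field; lra).
      apply Rmult_lt_0_compat; [apply Rdiv_lt_0_compat |]; lra.
    - apply is_RInt_minfty_lincomb;
        [apply id_mult_phi_continuous | apply phi_continuous | exact Hfirst |
         apply Phi_is_RInt_minfty]. }
  replace (phi x / - x) with (/ x * (- phi x - 0)) by (field; lra). lra.
Qed.

Definition mills (x : R) : R := Phi x / phi x.

Lemma mills_pos (x : R) : 0 < mills x.
Proof. apply Rdiv_lt_0_compat; [apply Phi_pos | apply phi_pos]. Qed.

Lemma mills_deriv (x : R) : is_derive mills x (1 + x * mills x).
Proof.
  replace (1 + x * mills x) with ((phi x * phi x - Phi x * (- x * phi x)) / phi x ^ 2)
    by (unfold mills; field; apply phi_neq0).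
  apply is_derive_div; [apply Phi_deriv | apply phi_deriv | apply phi_neq0].
Qed.

Lemma mills_deriv_pos (x : R) : 0 < 1 + x * mills x.
Proof.
  destruct (Rle_lt_dec 0 x) as [Hx | Hx]; [pose proof (mills_pos x); nra |].
  pose proof (Phi_lt_phi_div_opp x Hx). pose proof (phi_pos x).
  assert (mills x < 1 / - x).
  { unfold mills. apply Rmult_lt_reg_r with (phi x); auto.
    replace (Phi x / phi x * phi x) with (Phi x) by (field; lra).
    replace (1 / - x * phi x) with (phi x / - x) by (field; lra). lra. }
  assert (x * mills x > x * (1 / - x)) by (apply Rmult_lt_gt_compat_neg_l; auto).
  replace (x * (1 / - x)) with (-1) in H2 by (field; lra). lra.
Qed.

Lemma mills_lt (a b : R) : a < b -> mills a < mills b.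
Proof.
  intros H. apply (incr_function mills m_infty p_infty (fun x => 1 + x * mills x)); simpl; auto.
  - intros; apply mills_deriv.
  - intros; apply mills_deriv_pos.
Qed.

Definition shifted_inv_mills (x : R) : R := x + phi x / Phi x.

Lemma shifted_inv_mills_mult_mills (x : R) :
  shifted_inv_mills x * mills x = 1 + x * mills x.
Proof. unfold shifted_inv_mills, mills. field. split; [apply phi_neq0 | apply Phi_neq0]. Qed.

Lemma shifted_inv_mills_pos (x : R) : 0 < shifted_inv_mills x.
Proof.
  pose proof (shifted_inv_mills_mult_mills x). pose proof (mills_deriv_pos x).
  pose proof (mills_pos x). nra.
Qed.

Lemma shifted_inv_mills_deriv (x : R) :
  is_derive shifted_inv_mills x (1 - x * (phi x / Phi x) - (phi x / Phi x) ^ 2).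
Proof.
  replace (1 - x * (phi x / Phi x) - (phi x / Phi x) ^ 2)
    with (1 + (- x * phi x * Phi x - phi x * phi x) / Phi x ^ 2) by (field; apply Phi_neq0).
  apply is_derive_Rplus; [apply (@is_derive_id R_AbsRing) |].
  apply is_derive_div; [apply phi_deriv | apply Phi_deriv | apply Phi_neq0].
Qed.

Lemma is_lim_id_mult_phi_m : is_lim (fun z => z * phi z) m_infty 0.
Proof.
  apply is_lim_le_le_loc with (fun z => exp (1 / 2) * (z * exp z)) (fun _ => 0).
  - exists 0. intros z Hz. pose proof (phi_le_exp_affine z). pose proof (phi_pos z).
    rewrite exp_plus, Rmult_1_l in H. split; nra.
  - replace (Finite 0) with (Rbar_mult (exp (1 / 2)) 0) by (simpl; f_equal; ring).
    apply (is_lim_scal_l (fun z => z * exp z) (exp (1 / 2)) m_infty 0), is_lim_mul_exp_m.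
  - apply is_lim_const.
Qed.

(* With m = phi x / Phi x, 1 - x m - m^2 = Phi x^-1 * int_{-oo}^x (z + m)^2 phi z dz is the
   variance of a standard normal conditioned to lie below x. *)
Lemma shifted_inv_mills_deriv_pos (x : R) :
  0 < 1 - x * (phi x / Phi x) - (phi x / Phi x) ^ 2.
Proof.
  set (m := phi x / Phi x).
  set (g := fun z => (z + m) ^ 2 * phi z).
  set (G := fun z => Phi z - z * phi z - 2 * m * phi z + m ^ 2 * Phi z).
  assert (Hg : continuous_everywhere g).
  { apply continuous_everywhere_mult; [| apply phi_continuous].
    apply continuous_everywhere_of_derive. intros u. eexists. auto_derive; auto. }
  assert (HG : forall z, is_derive G z (g z)).
  { intros z. unfold G, g.
    replace ((z + m) ^ 2 * phi z)
      with (phi z - (1 * phi z + z * (- z * phi z)) - 2 * m * (- z * phi z) + m ^ 2 * phi z)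
      by ring.
    apply is_derive_Rplus; [apply is_derive_Rminus; [apply is_derive_Rminus |] |].
    - apply Phi_deriv.
    - apply (is_derive_Rmult (fun z => z) phi); [apply (@is_derive_id R_AbsRing) | apply phi_deriv].
    - apply is_derive_scal, phi_deriv.
    - apply is_derive_scal, Phi_deriv. }
  assert (HGlim : is_lim G m_infty 0).
  { replace (Finite 0) with (Finite (0 - 0 - 2 * m * 0 + m ^ 2 * 0)) by (f_equal; ring).
    apply is_lim_plus'; [apply is_lim_minus'; [apply is_lim_minus' |] |].
    - apply is_lim_Phi_m.
    - apply is_lim_id_mult_phi_m.
    - apply (is_lim_scal_l phi (2 * m) m_infty 0), is_lim_phi_m.
    - apply (is_lim_scal_l Phi (m ^ 2) m_infty 0), is_lim_Phi_m. }
  assert (Hpos : 0 < G x - 0).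
  { apply (is_RInt_minfty_gt0 g Hg (x - shifted_inv_mills x) x);
      [pose proof (shifted_inv_mills_pos x); lra | | |
       apply (is_RInt_minfty_of_derive g Hg G 0 x HG HGlim)].
    - intros z _. unfold g. pose proof (phi_pos z). pose proof (pow2_ge_0 (z + m)). nra.
    - intros z Hz. unfold g, shifted_inv_mills in *. fold m in Hz.
      apply Rmult_lt_0_compat; [apply pow_lt; lra | apply phi_pos]. }
  pose proof (Phi_pos x).
  replace (1 - x * m - m ^ 2) with ((G x - 0) / Phi x) by (unfold G, m; field; lra).
  apply Rdiv_lt_0_compat; auto.
Qed.

Lemma shifted_inv_mills_lt (a b : R) : a < b -> shifted_inv_mills a < shifted_inv_mills b.
Proof.
  intros H.
  apply (incr_function shifted_inv_mills m_infty p_infty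
           (fun x => 1 - x * (phi x / Phi x) - (phi x / Phi x) ^ 2)); simpl; auto.
  - intros; apply shifted_inv_mills_deriv.
  - intros; apply shifted_inv_mills_deriv_pos.
Qed.

(** * The selective posterior *)

Section SelectivePosterior.

Variables sigma t : R.
Hypothesis sigma_pos : 0 < sigma.

Lemma div_sigma_le (u v : R) : u <= v -> u / sigma <= v / sigma.
Proof. intros H. apply Rmult_le_compat_r; [left; apply Rinv_0_lt_compat |]; lra. Qed.

Lemma div_sigma_lt (u v : R) : u < v -> u / sigma < v / sigma.
Proof. intros H. apply Rmult_lt_compat_r; [apply Rinv_0_lt_compat |]; lra. Qed.

Lemma post_kernel_pos (y s : R) : 0 < post_kernel sigma t y s.
Proof. apply Rdiv_lt_0_compat; [apply phi_pos | apply Phi_pos]. Qed.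

Lemma post_kernel_continuous (y : R) : continuous_everywhere (post_kernel sigma t y).
Proof.
  apply continuous_everywhere_of_derive. intros s. eexists.
  apply (is_derive_div (fun s => phi ((s - y) / sigma)) (fun s => Phi ((s - t) / sigma))).
  - apply is_derive_comp_affine; [lra | apply phi_deriv].
  - apply is_derive_comp_affine; [lra | apply Phi_deriv].
  - apply Phi_neq0.
Qed.

Lemma post_kernel_tilt (y1 y2 s : R) :
  post_kernel sigma t y2 s = post_kernel sigma t y1 s *
    exp ((y2 - y1) / sigma ^ 2 * s + - (y2 ^ 2 - y1 ^ 2) / (2 * sigma ^ 2)).
Proof.
  unfold post_kernel, sel_prob. rewrite (phi_ratio ((s - y2) / sigma) ((s - y1) / sigma)).
  replace ((((s - y1) / sigma) ^ 2 - ((s - y2) / sigma) ^ 2) / 2)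
    with ((y2 - y1) / sigma ^ 2 * s + - (y2 ^ 2 - y1 ^ 2) / (2 * sigma ^ 2)) by (field; lra).
  field. apply Phi_neq0.
Qed.

(* Left of t, Phi ((s - t) / sigma) >= w * phi ((s - y) / sigma + w) with w = (y - t) / (2 sigma),
   so the kernel is O(exp (w s / sigma)). *)
Lemma post_kernel_ex_minfty (y : R) : t < y -> exists l, is_RInt_minfty (post_kernel sigma t y) t l.
Proof.
  intros Hty. set (w := (y - t) / (2 * sigma)).
  assert (Hw : 0 < w) by (apply Rdiv_lt_0_compat; lra).
  destruct (is_RInt_minfty_exp_dominated _ (post_kernel_continuous y) t (/ w) (w / sigma)
              (w ^ 2 / 2 - w * y / sigma)) as [l [Hl _]]; [apply Rdiv_lt_0_compat; lra | | eauto].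
  intros s Hs. split; [left; apply post_kernel_pos |].
  unfold post_kernel, sel_prob. set (a := (s - y) / sigma).
  replace ((s - t) / sigma) with (a + 2 * w) by (unfold a, w; field; lra).
  assert (HPhi : w * phi (a + w) <= Phi (a + 2 * w)).
  { replace (a + w) with (a + 2 * w - w) by ring. apply Phi_ge_mult_phi; [| lra].
    replace (a + 2 * w) with ((s - t) / sigma) by (unfold a, w; field; lra).
    replace 0 with (0 / sigma) by (field; lra). apply div_sigma_le. lra. }
  rewrite (phi_ratio a (a + w)).
  replace (((a + w) ^ 2 - a ^ 2) / 2) with (w / sigma * s + (w ^ 2 / 2 - w * y / sigma))
    by (unfold a; field; lra).
  set (E := exp (w / sigma * s + (w ^ 2 / 2 - w * y / sigma))).
  pose proof (exp_pos (w / sigma * s + (w ^ 2 / 2 - w * y / sigma))). fold E in H.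
  pose proof (phi_pos (a + w)).
  unfold Rdiv. apply Rle_trans with (phi (a + w) * E * / (w * phi (a + w))).
  - apply Rmult_le_compat_l; [nra |]. apply Rinv_le_contravar; nra.
  - right. field. lra.
Qed.

Lemma post_kernel_ex_pinfty (y : R) : exists l, is_RInt_pinfty (post_kernel sigma t y) t l.
Proof.
  apply (is_RInt_pinfty_exp_dominated _ (post_kernel_continuous y) t (/ Phi 0) (-1 / sigma)
           (y / sigma + 1 / 2)).
  { unfold Rdiv. assert (0 < / sigma) by (apply Rinv_0_lt_compat; lra). lra. }
  intros s Hs. split; [left; apply post_kernel_pos |].
  unfold post_kernel, sel_prob.
  assert (Phi 0 <= Phi ((s - t) / sigma)).
  { apply Phi_le. replace 0 with (0 / sigma) by (field; lra). apply div_sigma_le. lra. }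
  pose proof (phi_le_exp_neg_affine ((s - y) / sigma)).
  replace (-1 * ((s - y) / sigma) + 1 / 2) with (-1 / sigma * s + (y / sigma + 1 / 2))
    in H0 by (field; lra).
  pose proof (phi_pos ((s - y) / sigma)). pose proof (Phi_pos 0).
  unfold Rdiv at 1. rewrite Rmult_comm. apply Rmult_le_compat; [| lra | | lra].
  - left. apply Rinv_0_lt_compat, Phi_pos.
  - apply Rinv_le_contravar; lra.
Qed.

Definition post_num (y th : R) : R :=
  RInt_gen (post_kernel sigma t y) (Rbar_locally m_infty) (at_point th).

Definition post_mass (y : R) : R :=
  RInt_gen (post_kernel sigma t y) (Rbar_locally m_infty) (Rbar_locally p_infty).

Lemma sel_post_cdfE (y th : R) : sel_post_cdf sigma t y th = post_num y th / post_mass y.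
Proof. reflexivity. Qed.

Lemma post_kernel_integrals (y th : R) : t < y ->
  is_RInt_minfty (post_kernel sigma t y) th (post_num y th) /\
  is_RInt_pinfty (post_kernel sigma t y) th (post_mass y - post_num y th).
Proof.
  intros Hty.
  destruct (post_kernel_ex_minfty y Hty) as [l0 H0].
  destruct (post_kernel_ex_pinfty y) as [l1 H1].
  pose proof (post_kernel_continuous y) as Hc.
  assert (EN : post_num y th = l0 + RInt (post_kernel sigma t y) t th).
  { apply is_RInt_gen_unique, is_RInt_gen_of_minfty; auto. apply is_RInt_minfty_Chasles; auto. }
  assert (ED : post_mass y = l0 + l1).
  { apply is_RInt_gen_unique.
    apply (is_RInt_gen_Chasles _ t l0 l1);
      [apply is_RInt_gen_of_minfty | apply is_RInt_gen_of_pinfty]; auto. }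
  split; [rewrite EN; apply is_RInt_minfty_Chasles; auto |].
  replace (post_mass y - post_num y th) with (RInt (post_kernel sigma t y) th t + l1).
  - apply is_RInt_pinfty_Chasles; auto.
  - pose proof (RInt_Chasles_continuous _ Hc th t th). rewrite RInt_point in H.
    unfold zero in H; simpl in H. rewrite ED, EN. lra.
Qed.

Lemma post_mass_gt_num (y th : R) : t < y -> 0 < post_num y th < post_mass y.
Proof.
  intros Hty. destruct (post_kernel_integrals y th Hty) as [HN HM].
  pose proof (post_kernel_continuous y) as Hc.
  assert (Hk : forall s, 0 <= post_kernel sigma t y s) by (intros; left; apply post_kernel_pos).
  split.
  - apply (is_RInt_minfty_gt0 _ Hc (th - 1) th); auto; [lra | intros; apply post_kernel_pos].
  - cut (0 < post_mass y - post_num y th); [lra |].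
    apply (is_RInt_pinfty_gt0 _ Hc th (th + 1)); auto; [lra | intros; apply post_kernel_pos].
Qed.

Lemma post_mass_pos (y : R) : t < y -> 0 < post_mass y.
Proof. intros Hty. pose proof (post_mass_gt_num y 0 Hty). lra. Qed.

Lemma sel_post_cdf_lt (y th1 th2 : R) : t < y -> th1 < th2 ->
  sel_post_cdf sigma t y th1 < sel_post_cdf sigma t y th2.
Proof.
  intros Hty Hth. rewrite !sel_post_cdfE.
  pose proof (post_kernel_continuous y) as Hc.
  assert (E : post_num y th2 = post_num y th1 + RInt (post_kernel sigma t y) th1 th2).
  { apply (is_RInt_minfty_unique (post_kernel sigma t y) th2);
      [apply post_kernel_integrals, Hty | apply is_RInt_minfty_Chasles, post_kernel_integrals; auto]. }
  pose proof (RInt_gt0_continuous _ Hc th1 th2 Hth (fun x _ => post_kernel_pos y x)).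
  pose proof (post_mass_pos y Hty).
  apply Rmult_lt_compat_r; [apply Rinv_0_lt_compat |]; lra.
Qed.

Lemma sel_post_cdf_decr (y1 y2 th : R) : t < y1 -> y1 < y2 ->
  sel_post_cdf sigma t y2 th < sel_post_cdf sigma t y1 th.
Proof.
  intros Hty1 Hy12. rewrite !sel_post_cdfE.
  destruct (post_kernel_integrals y1 th Hty1) as [HA1 HB1].
  destruct (post_kernel_integrals y2 th) as [HA2 HB2]; [lra |].
  pose proof (post_mass_pos y2 ltac:(lra)).
  replace (post_mass y1) with (post_num y1 th + (post_mass y1 - post_num y1 th)) by ring.
  replace (post_mass y2) with (post_num y2 th + (post_mass y2 - post_num y2 th)) by ring.
  set (c := (y2 - y1) / sigma ^ 2).
  assert (Hc : 0 < c) by (apply Rdiv_lt_0_compat; [lra | apply pow_lt; lra]).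
  apply (tilted_cdf_lt (post_kernel sigma t y1)
           (fun s => exp (c * s + - (y2 ^ 2 - y1 ^ 2) / (2 * sigma ^ 2)))
           (post_kernel sigma t y2) th); auto; [apply post_kernel_continuous .. | | | | lra].
  - apply post_kernel_pos.
  - intros x z Hxz. apply exp_increasing. nra.
  - intros s. apply post_kernel_tilt.
Qed.

(* For y >= t this is P_th(Y >= y | S). *)
Definition sel_surv (y th : R) : R := Phi ((th - y) / sigma) / Phi ((th - t) / sigma).

Definition sel_surv_tilt (y s : R) : R :=
  / sigma * (1 - mills ((s - y) / sigma) / mills ((s - t) / sigma)).

Lemma sel_surv_deriv (y s : R) :
  is_derive (sel_surv y) s (post_kernel sigma t y s * sel_surv_tilt y s).
Proof.
  replace (post_kernel sigma t y s * sel_surv_tilt y s) with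
    ((phi ((s - y) / sigma) / sigma * Phi ((s - t) / sigma)
      - Phi ((s - y) / sigma) * (phi ((s - t) / sigma) / sigma)) / Phi ((s - t) / sigma) ^ 2).
  - apply (is_derive_div (fun s => Phi ((s - y) / sigma)) (fun s => Phi ((s - t) / sigma)));
      [apply is_derive_comp_affine; [lra | apply Phi_deriv] ..| apply Phi_neq0].
  - unfold post_kernel, sel_prob, sel_surv_tilt, mills. field.
    repeat split; try apply phi_neq0; try apply Phi_neq0; lra.
Qed.

Lemma sel_surv_tilt_deriv (y s : R) :
  is_derive (sel_surv_tilt y) s (/ sigma ^ 2 * (mills ((s - y) / sigma) / mills ((s - t) / sigma))
    * (shifted_inv_mills ((s - t) / sigma) - shifted_inv_mills ((s - y) / sigma))).
Proof.
  set (a := (s - y) / sigma). set (b := (s - t) / sigma).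
  pose proof (mills_pos b).
  replace (/ sigma ^ 2 * (mills a / mills b) * (shifted_inv_mills b - shifted_inv_mills a))
    with (/ sigma * (0 - ((1 + a * mills a) / sigma * mills b
                          - mills a * ((1 + b * mills b) / sigma)) / mills b ^ 2)).
  - apply is_derive_scal, is_derive_Rminus; [apply (@is_derive_const R_AbsRing R_NormedModule) |].
    apply (is_derive_div (fun s => mills ((s - y) / sigma)) (fun s => mills ((s - t) / sigma)));
      [apply is_derive_comp_affine; [lra | apply mills_deriv] .. | apply Rgt_not_eq, mills_pos].
  - rewrite <- !shifted_inv_mills_mult_mills. field. lra.
Qed.

Lemma sel_surv_tilt_lt (y x z : R) : t < y -> x < z -> sel_surv_tilt y x < sel_surv_tilt y z.
Proof.
  intros Hty Hxz.
  apply (incr_function (sel_surv_tilt y) m_infty p_infty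
    (fun s => / sigma ^ 2 * (mills ((s - y) / sigma) / mills ((s - t) / sigma))
      * (shifted_inv_mills ((s - t) / sigma) - shifted_inv_mills ((s - y) / sigma))));
    [| | easy | exact Hxz | easy].
  - intros s _ _. apply sel_surv_tilt_deriv.
  - intros s _ _.
    assert (Hab : (s - y) / sigma < (s - t) / sigma) by (apply div_sigma_lt; lra).
    pose proof (shifted_inv_mills_lt _ _ Hab).
    assert (0 < mills ((s - y) / sigma) / mills ((s - t) / sigma))
      by (apply Rdiv_lt_0_compat; apply mills_pos).
    assert (0 < / sigma ^ 2) by (apply Rinv_0_lt_compat, pow_lt; lra).
    apply Rmult_lt_0_compat; [apply Rmult_lt_0_compat |]; lra.
Qed.

(* mills is increasing, hence Phi a / Phi b <= phi a / phi b for a < b *)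
Lemma is_lim_sel_surv_m (y : R) : t < y -> is_lim (sel_surv y) m_infty 0.
Proof.
  intros Hty.
  apply is_lim_0_squeeze with
    (fun s => exp ((y - t) / sigma ^ 2 * s + - (y ^ 2 - t ^ 2) / (2 * sigma ^ 2))).
  - apply filter_forall. intros s. unfold sel_surv.
    set (a := (s - y) / sigma). set (b := (s - t) / sigma).
    assert (Hab : a < b) by (apply div_sigma_lt; lra).
    pose proof (mills_lt a b Hab). unfold mills in H.
    pose proof (Phi_pos a). pose proof (Phi_pos b). pose proof (phi_pos a). pose proof (phi_pos b).
    replace ((y - t) / sigma ^ 2 * s + - (y ^ 2 - t ^ 2) / (2 * sigma ^ 2))
      with ((b ^ 2 - a ^ 2) / 2) by (unfold a, b; field; lra).
    replace (exp ((b ^ 2 - a ^ 2) / 2)) with (phi a / phi b) by (rewrite (phi_ratio a b); field; lra).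
    split; [left; apply Rdiv_lt_0_compat; auto |].
    apply Rmult_le_reg_r with (Phi b * phi b / phi a); [apply Rdiv_lt_0_compat; nra |].
    replace (Phi a / Phi b * (Phi b * phi b / phi a)) with (Phi a / phi a * phi b) by (field; lra).
    replace (phi a / phi b * (Phi b * phi b / phi a)) with (Phi b / phi b * phi b) by (field; lra).
    apply Rmult_le_compat_r; lra.
  - apply is_lim_exp_affine_m. apply Rdiv_lt_0_compat; [lra | apply pow_lt; lra].
Qed.

Lemma is_lim_sel_surv_p (y : R) : t < y -> is_lim (sel_surv y) p_infty 1.
Proof.
  intros Hty. set (w := (y - t) / sigma).
  assert (Hw : 0 < w) by (apply Rdiv_lt_0_compat; lra).
  assert (Hcompl : is_lim (fun s => 1 - sel_surv y s) p_infty 0).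
  { apply is_lim_0_squeeze with
      (fun s => w / Phi 0 * exp (-1 / sigma * s + (y / sigma + 1 / 2))).
    - exists y. intros s Hsy. unfold sel_surv.
      set (a := (s - y) / sigma). set (b := (s - t) / sigma).
      set (E := exp (-1 / sigma * s + (y / sigma + 1 / 2))).
      assert (Ha0 : 0 <= a) by (replace 0 with (0 / sigma) by (field; lra); apply div_sigma_le; lra).
      assert (Hba : b - a = w) by (unfold a, b, w; field; lra).
      pose proof (Phi_pos b). pose proof (Phi_pos 0). pose proof (Phi_le 0 b ltac:(lra)).
      pose proof (Phi_le a b ltac:(lra)).
      assert (Hdiff : Phi b - Phi a <= w * E).
      { pose proof (Phi_sub_le_pos a b ltac:(lra)) as Hsub. rewrite Hba in Hsub.
        pose proof (phi_le_exp_neg_affine a) as HE.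
        replace (-1 * a + 1 / 2) with (-1 / sigma * s + (y / sigma + 1 / 2)) in HE
          by (unfold a; field; lra).
        fold E in HE.
        apply Rle_trans with (w * phi a); [exact Hsub | apply Rmult_le_compat_l; lra]. }
      replace (1 - Phi a / Phi b) with ((Phi b - Phi a) / Phi b) by (field; lra).
      replace (w / Phi 0 * E) with ((w * E) / Phi 0) by (field; lra).
      split; [apply Rdiv_le_0_compat; lra |].
      apply Rle_trans with ((Phi b - Phi a) / Phi 0).
      + apply Rmult_le_compat_l; [lra | apply Rinv_le_contravar; lra].
      + apply Rmult_le_compat_r; [left; apply Rinv_0_lt_compat; lra | exact Hdiff].
    - replace (Finite 0) with (Rbar_mult (w / Phi 0) 0) by (simpl; f_equal; ring).
      apply (is_lim_scal_l _ (w / Phi 0) p_infty 0), is_lim_exp_affine_p.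
      unfold Rdiv. assert (0 < / sigma) by (apply Rinv_0_lt_compat; lra). lra. }
  apply is_lim_ext with (fun s => 1 - (1 - sel_surv y s)); [intros; ring |].
  replace (Finite 1) with (Finite (1 - 0)) by (f_equal; ring).
  apply is_lim_minus'; [apply is_lim_const | exact Hcompl].
Qed.

Lemma sel_surv_lt_sel_post_cdf (y th : R) : t < y -> sel_surv y th < sel_post_cdf sigma t y th.
Proof.
  intros Hty.
  assert (Hc : continuous_everywhere (fun s => post_kernel sigma t y s * sel_surv_tilt y s)).
  { apply continuous_everywhere_mult; [apply post_kernel_continuous |].
    apply continuous_everywhere_of_derive. intros s. eexists. apply sel_surv_tilt_deriv. }
  pose proof (is_RInt_minfty_of_derive _ Hc (sel_surv y) 0 th (sel_surv_deriv y)
                (is_lim_sel_surv_m y Hty)) as HA.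
  pose proof (is_RInt_pinfty_of_derive _ Hc (sel_surv y) 1 th (sel_surv_deriv y)
                (is_lim_sel_surv_p y Hty)) as HB.
  destruct (post_kernel_integrals y th Hty) as [HN HM].
  rewrite sel_post_cdfE.
  replace (post_mass y) with (post_num y th + (post_mass y - post_num y th)) by ring.
  replace (sel_surv y th) with ((sel_surv y th - 0) / ((sel_surv y th - 0) + (1 - sel_surv y th)))
    by (field; lra).
  apply (tilted_cdf_lt (post_kernel sigma t y) (sel_surv_tilt y)
           (fun s => post_kernel sigma t y s * sel_surv_tilt y s) th); auto; [| | | lra].
  - apply post_kernel_continuous.
  - apply post_kernel_pos.
  - intros x z. apply sel_surv_tilt_lt, Hty.
Qed.

Lemma post_kernel_shift_le (y d u : R) : 0 < d ->
  post_kernel sigma t (y + d) (u + d) <= post_kernel sigma t y u.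
Proof.
  intros Hd. unfold post_kernel, sel_prob.
  replace ((u + d - (y + d)) / sigma) with ((u - y) / sigma) by (field; lra).
  pose proof (phi_pos ((u - y) / sigma)). pose proof (Phi_pos ((u - t) / sigma)).
  assert (Phi ((u - t) / sigma) <= Phi ((u + d - t) / sigma)) by (apply Phi_le, div_sigma_le; lra).
  apply Rmult_le_compat_l; [lra | apply Rinv_le_contravar; lra].
Qed.

Lemma RInt_post_kernel_shift_le (y d a b : R) : t < y -> 0 < d -> a <= b ->
  RInt (post_kernel sigma t (y + d)) a b <= post_mass y.
Proof.
  intros Hty Hd Hab.
  pose proof (post_kernel_continuous (y + d)) as Hc.
  assert (Hshift : continuous_everywhere (fun u => post_kernel sigma t (y + d) (1 * u + d))).
  { intros u. apply (continuous_comp (fun u => 1 * u + d)); [| apply Hc].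
    apply continuous_everywhere_of_derive. intros v. eexists. auto_derive; auto. }
  assert (E : RInt (post_kernel sigma t (y + d)) a b
              = RInt (fun u => post_kernel sigma t (y + d) (1 * u + d)) (a - d) (b - d)).
  { replace a with (1 * (a - d) + d) at 1 by ring. replace b with (1 * (b - d) + d) at 1 by ring.
    rewrite <- (RInt_comp_lin _ 1 d (a - d) (b - d)) by apply ex_RInt_continuous_everywhere, Hc.
    apply RInt_ext. intros u _. apply Rmult_1_l. }
  rewrite E. apply Rle_trans with (RInt (post_kernel sigma t y) (a - d) (b - d)).
  - apply RInt_le; [lra | apply ex_RInt_continuous_everywhere .. |];
      [exact Hshift | apply post_kernel_continuous |].
    intros u _. rewrite Rmult_1_l. apply post_kernel_shift_le, Hd.
  - destruct (post_kernel_integrals y t Hty) as [HN HM].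
    replace (post_mass y) with (post_num y t + (post_mass y - post_num y t)) by ring.
    apply (RInt_le_minfty_pinfty _ (post_kernel_continuous y) t); auto; [| lra].
    intros; left; apply post_kernel_pos.
Qed.

Lemma post_mass_shift_le (y d : R) : t < y -> 0 < d -> post_mass (y + d) <= post_mass y.
Proof.
  intros Hty Hd. destruct (post_kernel_integrals (y + d) t) as [HN HM]; [lra |].
  replace (post_mass (y + d)) with (post_num (y + d) t + (post_mass (y + d) - post_num (y + d) t))
    by ring.
  apply (is_RInt_minfty_pinfty_le _ (post_kernel_continuous (y + d)) t); auto.
  intros a b Hab. apply RInt_post_kernel_shift_le; auto.
Qed.

Lemma RInt_post_kernel_tilt_ge (y d a th : R) : 0 < d -> a <= th ->
  exp (d * (2 * a - 2 * y - d) / (2 * sigma ^ 2)) * RInt (post_kernel sigma t y) a th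
    <= RInt (post_kernel sigma t (y + d)) a th.
Proof.
  intros Hd Hath.
  set (c := (y + d - y) / sigma ^ 2).
  assert (Hc : 0 <= c) by (apply Rmult_le_pos; [lra | left; apply Rinv_0_lt_compat, pow_lt; lra]).
  set (E := fun s => exp (c * s + - ((y + d) ^ 2 - y ^ 2) / (2 * sigma ^ 2))).
  replace (exp (d * (2 * a - 2 * y - d) / (2 * sigma ^ 2))) with (E a)
    by (unfold E, c; f_equal; field; lra).
  pose proof (ex_RInt_continuous_everywhere _ a th (post_kernel_continuous y)) as Hex.
  apply Rle_trans with (RInt (fun s => scal (E a) (post_kernel sigma t y s)) a th);
    [right; symmetry; exact (RInt_scal _ a th (E a) Hex) |].
  apply RInt_le; [exact Hath | apply (ex_RInt_scal _ a th (E a) Hex) |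
                  apply ex_RInt_continuous_everywhere, post_kernel_continuous |].
  intros s Hs. rewrite (post_kernel_tilt y (y + d) s). fold c. fold (E s).
  pose proof (post_kernel_pos y s). assert (E a <= E s) by (apply exp_le; nra).
  unfold scal; simpl; unfold mult; simpl. nra.
Qed.

(* Moving y to y + d multiplies the kernel on [a, th] by at least a factor close to 1 for small d,
   while the normalising mass does not increase. *)
Lemma sel_post_cdf_gt_right (y th al : R) : t < y -> 0 < al -> al < sel_post_cdf sigma t y th ->
  exists y', y < y' /\ al < sel_post_cdf sigma t y' th.
Proof.
  intros Hty Hal Hgt. rewrite sel_post_cdfE in Hgt.
  destruct (post_kernel_integrals y th Hty) as [HN _].
  pose proof (post_mass_pos y Hty) as HD.
  set (N := post_num y th) in *. set (D := post_mass y) in *.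
  set (ga := (al + N / D) / 2).
  assert (Hga : al < ga < N / D) by (unfold ga; lra).
  assert (HgaD : ga * D < N).
  { apply Rmult_lt_reg_r with (/ D); [apply Rinv_0_lt_compat, HD |].
    replace (ga * D * / D) with ga by (field; lra). apply Hga. }
  destruct (RInt_gt_of_is_RInt_minfty _ th N (ga * D) HN HgaD) as [a [Ha HR]].
  destruct (exp_ge_near_zero (2 * a - 2 * y) (2 * sigma ^ 2) (al / ga)) as [d [Hd HE]].
  { pose proof (pow_lt sigma 2 sigma_pos). lra. }
  { apply Rmult_lt_reg_r with ga; [lra |]. replace (al / ga * ga) with al by (field; lra). lra. }
  exists (y + d). split; [lra |].
  destruct (post_kernel_integrals (y + d) th) as [HN' _]; [lra |].
  pose proof (post_mass_pos (y + d) ltac:(lra)). pose proof (post_mass_shift_le y d Hty Hd) as HDd.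
  fold D in HDd.
  pose proof (RInt_post_kernel_tilt_ge y d a th Hd ltac:(lra)).
  assert (HN'ge : RInt (post_kernel sigma t (y + d)) a th <= post_num (y + d) th).
  { apply (RInt_le_minfty _ (post_kernel_continuous (y + d)) th); auto; [| lra].
    intros; left; apply post_kernel_pos. }
  assert (Hlow : al * D < post_num (y + d) th).
  { replace (al * D) with (al / ga * (ga * D)) by (field; lra).
    assert (0 < ga * D) by (apply Rmult_lt_0_compat; lra).
    apply Rlt_le_trans with (al / ga * RInt (post_kernel sigma t y) a th);
      [apply Rmult_lt_compat_l; [apply Rdiv_lt_0_compat |]; lra |].
    apply Rle_trans with
      (exp (d * (2 * a - 2 * y - d) / (2 * sigma ^ 2)) * RInt (post_kernel sigma t y) a th);
      [apply Rmult_le_compat_r; lra | lra]. }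
  rewrite sel_post_cdfE.
  apply Rlt_le_trans with (post_num (y + d) th / D).
  - apply Rmult_lt_reg_r with D; [exact HD |]. unfold Rdiv.
    rewrite Rmult_assoc, Rinv_l, Rmult_1_r by lra. exact Hlow.
  - unfold Rdiv. apply Rmult_le_compat_l; [pose proof (post_mass_gt_num (y + d) th ltac:(lra)); lra |].
    apply Rinv_le_contravar; lra.
Qed.

Lemma sel_surv_ge_near_t (th al : R) : 0 < al < 1 -> exists y, t < y /\ al <= sel_surv y th.
Proof.
  intros Hal. set (b := (th - t) / sigma). pose proof (Phi_pos b).
  set (e := (1 - al) * Phi b).
  assert (He : 0 < e) by (unfold e; nra).
  exists (t + sigma * e). split; [nra |].
  unfold sel_surv. fold b.
  replace ((th - (t + sigma * e)) / sigma) with (b - e) by (unfold b; field; lra).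
  pose proof (Phi_lipschitz (b - e) b ltac:(lra)).
  apply Rmult_le_reg_r with (Phi b); [exact H |].
  replace (Phi (b - e) / Phi b * Phi b) with (Phi (b - e)) by (field; lra).
  unfold e in *. lra.
Qed.

Lemma sel_density_le_t (th y : R) : y <= t -> sel_density sigma t th y = 0.
Proof.
  intros Hy. unfold sel_density, sel_fun. destruct (Rlt_dec t y); [lra |]. unfold Rdiv. ring.
Qed.

Lemma sel_density_gt_t (th y : R) : t < y ->
  sel_density sigma t th y = / sel_prob sigma t th * normal_pdf sigma th y.
Proof.
  intros Hy. unfold sel_density, sel_fun. destruct (Rlt_dec t y); [| lra]. unfold Rdiv. ring.
Qed.

Lemma sel_cond_prob_ext (A B : R -> Prop) (th : R) : (forall y, t < y -> (A y <-> B y)) ->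
  sel_cond_prob sigma t th A = sel_cond_prob sigma t th B.
Proof.
  intros HAB. unfold sel_cond_prob. f_equal. apply functional_extensionality. intros y.
  destruct (Rle_lt_dec y t) as [Hy | Hy]; [rewrite sel_density_le_t by exact Hy; ring |].
  specialize (HAB y Hy).
  destruct (excluded_middle_informative (A y)), (excluded_middle_informative (B y));
    tauto || reflexivity.
Qed.

Lemma sel_cond_prob_empty (A : R -> Prop) (th : R) : (forall y, t < y -> ~ A y) ->
  sel_cond_prob sigma t th A = 0.
Proof.
  intros HA. apply is_RInt_gen_unique.
  apply (is_RInt_gen_ext (fun _ => 0)); [| exact (is_RInt_gen_zero _ _)].
  apply filter_forall. intros ab x _.
  symmetry. destruct (Rle_lt_dec x t) as [Hx | Hx].
  - rewrite sel_density_le_t by exact Hx. apply Rmult_0_r.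
  - destruct (excluded_middle_informative (A x)) as [HAx | _];
      [destruct (HA x Hx HAx) | apply Rmult_0_l].
Qed.

Lemma normal_pdf_continuous (th : R) : continuous_everywhere (normal_pdf sigma th).
Proof.
  apply continuous_everywhere_of_derive. intros y. eexists.
  apply (is_derive_div (fun y => phi ((y - th) / sigma)) (fun _ => sigma));
    [apply is_derive_comp_affine; [lra | apply phi_deriv] |
     apply (@is_derive_const R_AbsRing R_NormedModule) | lra].
Qed.

Lemma normal_pdf_is_RInt_pinfty (th a : R) :
  is_RInt_pinfty (normal_pdf sigma th) a (Phi ((th - a) / sigma)).
Proof.
  replace (Phi ((th - a) / sigma)) with (0 - - Phi ((a - th) / - sigma))
    by (replace ((a - th) / - sigma) with ((th - a) / sigma) by (field; lra); ring).
  apply (is_RInt_pinfty_of_derive _ (normal_pdf_continuous th) (fun y => - Phi ((y - th) / - sigma))).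
  - intros y. replace (normal_pdf sigma th y) with (- (phi ((y - th) / - sigma) / - sigma)).
    + apply is_derive_Ropp, is_derive_comp_affine; [lra | apply Phi_deriv].
    + unfold normal_pdf. replace ((y - th) / - sigma) with (- ((y - th) / sigma)) by (field; lra).
      rewrite phi_opp. field. lra.
  - replace (Finite 0) with (Rbar_opp 0) by (simpl; f_equal; ring).
    apply is_lim_opp, is_lim_0_squeeze with (fun y => exp (-1 / sigma * y + (th / sigma + 1 / 2))).
    + apply filter_forall. intros y. split; [left; apply Phi_pos |].
      replace (-1 / sigma * y + (th / sigma + 1 / 2)) with (1 * ((y - th) / - sigma) + 1 / 2)
        by (field; lra).
      apply Phi_le_exp_affine.
    + apply is_lim_exp_affine_p. assert (0 < / sigma) by (apply Rinv_0_lt_compat; lra).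
      unfold Rdiv. lra.
Qed.

Lemma sel_cond_prob_ray (A : R -> Prop) (th ys : R) : t < ys ->
  (forall y, t < y -> (A y <-> ys <= y)) -> sel_cond_prob sigma t th A = sel_surv ys th.
Proof.
  intros Hts HA. apply is_RInt_gen_unique.
  replace (sel_surv ys th) with (0 + / sel_prob sigma t th * Phi ((th - ys) / sigma))
    by (unfold sel_surv, sel_prob; field; apply Phi_neq0).
  apply (is_RInt_gen_Chasles _ ys 0 (/ sel_prob sigma t th * Phi ((th - ys) / sigma))).
  - apply (is_RInt_gen_ext (fun _ => 0)); [| exact (is_RInt_gen_zero _ _)].
    apply Filter_prod with (fun a => a < ys) (fun b => b = ys); [exists ys; auto | reflexivity |].
    intros a b Ha -> x Hx. simpl in Hx. rewrite Rmin_left, Rmax_right in Hx by lra.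
    symmetry. destruct (Rle_lt_dec x t) as [Hxt | Hxt].
    + rewrite sel_density_le_t by exact Hxt. apply Rmult_0_r.
    + destruct (excluded_middle_informative (A x)) as [HAx | _];
        [apply HA in HAx; lra | apply Rmult_0_l].
  - apply (is_RInt_gen_ext (fun y => / sel_prob sigma t th * normal_pdf sigma th y)).
    + apply Filter_prod with (fun a => a = ys) (fun b => ys < b); [reflexivity | exists ys; auto |].
      intros a b -> Hb x Hx. simpl in Hx. rewrite Rmin_left, Rmax_right in Hx by lra.
      rewrite sel_density_gt_t by lra.
      destruct (excluded_middle_informative (A x)) as [_ | HnA]; [symmetry; apply Rmult_1_l |].
      exfalso. apply HnA, HA; lra.
    + apply (is_RInt_gen_scal (normal_pdf sigma th)), is_RInt_gen_of_pinfty;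
        [apply normal_pdf_continuous | apply normal_pdf_is_RInt_pinfty].
Qed.

Lemma sel_post_cdf_le_ray (th al : R) : 0 < al < 1 ->
  (exists y, t < y /\ sel_post_cdf sigma t y th <= al) ->
  exists ys, t < ys /\ forall y, t < y -> (sel_post_cdf sigma t y th <= al <-> ys <= y).
Proof.
  intros Hal Hne.
  destruct (upward_closed_ray (fun y => t < y /\ sel_post_cdf sigma t y th <= al)) as [ys Hys].
  - intros y y' [Hty Hle] Hyy'. split; [lra |].
    pose proof (sel_post_cdf_decr y y' th Hty Hyy'). lra.
  - exact Hne.
  - exists t. intros [Ht _]. lra.
  - intros y Hny. destruct (Rle_lt_dec y t) as [Hyt | Hty].
    + destruct (sel_surv_ge_near_t th al Hal) as [y' [Hty' Hge]].
      exists y'. split; [lra |]. intros [_ Hle].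
      pose proof (sel_surv_lt_sel_post_cdf y' th Hty'). lra.
    + assert (Hgt : al < sel_post_cdf sigma t y th) by (apply Rnot_le_lt; intros Hle; apply Hny; auto).
      destruct (sel_post_cdf_gt_right y th al Hty (proj1 Hal) Hgt) as [y' [Hyy' Hgt']].
      exists y'. split; [exact Hyy' | intros [_ Hle]; lra].
  - assert (Hts : t < ys) by apply (proj2 (Hys ys) (Rle_refl ys)).
    exists ys. split; [exact Hts |]. intros y Hty. rewrite <- Hys. tauto.
Qed.

End SelectivePosterior.

Theorem proposition1 (sigma t alpha theta0 : R) (q : R -> R) :
  0 < sigma -> 0 < alpha < 1 ->
  (forall y, t < y -> sel_post_cdf sigma t y (q y) = alpha) ->
  sel_cond_prob sigma t theta0 (fun y => theta0 <= q y) < alpha.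
Proof.
  intros Hsigma Halpha Hq.
  rewrite (sel_cond_prob_ext sigma t (fun y => theta0 <= q y)
             (fun y => sel_post_cdf sigma t y theta0 <= alpha)).
  2: { intros y Hy. apply le_iff_of_strict_incr; [| apply Hq, Hy].
       intros u v. apply sel_post_cdf_lt; assumption. }
  destruct (classic (exists y, t < y /\ sel_post_cdf sigma t y theta0 <= alpha))
    as [Hne | Hempty].
  - destruct (sel_post_cdf_le_ray sigma t Hsigma theta0 alpha Halpha Hne) as [ys [Hts Hray]].
    rewrite (sel_cond_prob_ray sigma t Hsigma _ theta0 ys Hts Hray).
    pose proof (sel_surv_lt_sel_post_cdf sigma t Hsigma ys theta0 Hts).
    pose proof (proj2 (Hray ys Hts) (Rle_refl ys)). lra.
  - rewrite sel_cond_prob_empty; [lra |].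
    intros y Hy Hle. apply Hempty. exists y. split; assumption.
Qed.
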